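(* Let $k$ be an algebraically closed field of characteristic $p>0$, and let $f:\mathbb A^n_k\to\mathbb A^n_k$ be a homomorphism of algebraic groups $\mathbb G_a^n\to\mathbb G_a^n$, given by additive polynomials \[ f_j(x_1,\dots,x_n)=\sum_{i=1}^n\sum_{\ell=0}^{N_j}a_{j,i,\ell}\,x_i^{p^\ell},\qquad 1\le j\le n. \] Assume $f$ is finite and bijective on $k$-points (equivalently, $f$ is a finite radicial isogeny of $\mathbb G_a^n$). Then for every $k$-linear subspace $W\subset\mathbb A^n_k$, the reduced inverse image satisfies $f^{-1}(W)_{\mathrm{red}}\cong\mathbb A^{\dim W}_k$ as $k$-varieties. *)

From HB Require Import structures.
From mathcomp Require Import all_boot all_order all_algebra all_field.
From mathcomp Require Import mpoly.
Set Implicit Arguments. Unset Strict Implicit. Unset Printing Implicit Defensive.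
Import GRing.Theory.
Local Open Scope ring_scope.

Section AddPoly.
Variables (k : fieldType) (n : nat).

Definition addpoly (p : nat) (N : 'I_n -> nat) (a : 'I_n -> 'I_n -> nat -> k)
  (j : 'I_n) : {mpoly k[n]} :=
  \sum_(i < n) \sum_(l < (N j).+1) a j i l *: ('X_i ^+ (p ^ l)).

Definition polymap (m : nat) (P : 'I_m -> {mpoly k[n]}) (x : 'rV[k]_n) : 'rV[k]_m :=
  \row_(j < m) (P j).@[fun i => x 0 i].

(* The morphism A^n -> A^n given by f = (f_1,..,f_n) is finite:
   k[x_1..x_n] is a finitely generated module over k[f_1..f_n]
   (the image of the comorphism q |-> q(f_1,..,f_n)). *)
Definition finite_polymap (f : 'I_n -> {mpoly k[n]}) : Prop :=
  exists (m : nat) (g : 'I_m -> {mpoly k[n]}),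
    forall q : {mpoly k[n]}, exists c : 'I_m -> {mpoly k[n]},
      q = \sum_(l < m) comp_mpoly [tuple f i | i < n] (c l) * g l.

End AddPoly.

(* Write f as a square matrix F of additive polynomials acting on k^n, and pick an
   invertible A such that W = {v | the first r coordinates of v A vanish}, where
   r = n - dim W.  Composing additive polynomials on the right with additive monomials
   c x^(p^t) and swapping columns correspond to polynomial automorphisms of A^n, and
   these suffice to run Euclid's algorithm along each row; hence A^T F = L o E with L
   lower triangular and E a polynomial automorphism.  As k is algebraically closed, a
   nonzero additive polynomial is surjective, so a nonzero root of a diagonal entry of L
   would extend to a nonzero vector of the kernel of L; since f is injective there is
   none.  Therefore f(x) lies in W iff the first r coordinates of E x vanish, and
   f^{-1}(W) is the image under E^{-1} of a coordinate subspace of dimension dim W. *)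

From HB Require Import structures.
From mathcomp Require Import all_boot all_order all_algebra all_field.
From mathcomp Require Import fingroup perm.
From mathcomp Require Import mpoly.
From mathcomp Require Import zify ring.
Import GRing.Theory.
Local Open Scope ring_scope.
Set Implicit Arguments. Unset Strict Implicit. Unset Printing Implicit Defensive.

Section PHorner.
Variables (R : comNzRingType) (p : nat).

(* [b] encodes the additive polynomial \sum_l b_l X^(p^l), whose values [phorner b]
   computes. *)
Definition phorner (b : {poly R}) (x : R) : R :=
  \sum_(l < size b) b`_l * x ^+ (p ^ l).

Lemma phorner_widen (b : {poly R}) x m : (size b <= m)%N ->
  phorner b x = \sum_(l < m) b`_l * x ^+ (p ^ l).
Proof.
move=> le_b_m; rewrite /phorner (big_ord_widen m (fun l => b`_l * x ^+ (p ^ l))) //.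
rewrite big_mkcond; apply: eq_bigr => l _; case: ifP => // /negbT.
by rewrite -leqNgt => le_b_l; rewrite nth_default // mul0r.
Qed.

Lemma phorner0 x : phorner 0 x = 0.
Proof. by rewrite /phorner size_poly0 big_ord0. Qed.

Lemma phornerD (b c : {poly R}) x : phorner (b + c) x = phorner b x + phorner c x.
Proof.
set m := maxn (size b) (size c).
rewrite !(@phorner_widen _ _ m) ?size_polyD ?leq_maxl ?leq_maxr // -big_split.
by apply: eq_bigr => l _; rewrite coefD mulrDl.
Qed.

Lemma phornerZ a (b : {poly R}) x : phorner (a *: b) x = a * phorner b x.
Proof.
rewrite (@phorner_widen _ _ (size b)) ?size_scale_leq // mulr_sumr.
by apply: eq_bigr => l _; rewrite coefZ mulrA.
Qed.

Lemma phornerN (b : {poly R}) x : phorner (- b) x = - phorner b x.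
Proof. by rewrite -scaleN1r phornerZ mulN1r. Qed.

Lemma phornerB (b c : {poly R}) x : phorner (b - c) x = phorner b x - phorner c x.
Proof. by rewrite phornerD phornerN. Qed.

Lemma phorner_sum I (r : seq I) (P : pred I) (F : I -> {poly R}) x :
  phorner (\sum_(i <- r | P i) F i) x = \sum_(i <- r | P i) phorner (F i) x.
Proof. by elim/big_rec2: _ => [|i y b _ <-]; rewrite ?phorner0 ?phornerD. Qed.

Lemma phornerXn m x : phorner 'X^m x = x ^+ (p ^ m).
Proof.
rewrite /phorner size_polyXn (bigD1 ord_max) //= coefXn eqxx mul1r big1 ?addr0 //.
by move=> l /negbTE; rewrite coefXn -val_eqE /= => ->; rewrite mul0r.
Qed.

(* The product [b * c tau^t] in the twisted polynomial ring R{tau}, tau x = x ^+ p. *)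
Definition pcomp_monomial (b : {poly R}) (c : R) (t : nat) : {poly R} :=
  \poly_(i < size b) (b`_i * c ^+ (p ^ i)) * 'X^t.

Lemma pcomp_monomial0 c t : pcomp_monomial 0 c t = 0.
Proof. by rewrite /pcomp_monomial size_poly0 poly_def big_ord0 mul0r. Qed.

Lemma phorner_pcomp_monomial b c t x :
  phorner (pcomp_monomial b c t) x = phorner b (c * x ^+ (p ^ t)).
Proof.
rewrite /pcomp_monomial; set q := \poly_(i < size b) _.
have size_qXt : (size (q * 'X^t)%R <= t + size b)%N.
  have [->|nz_q] := eqVneq q 0; first by rewrite mul0r size_poly0.
  by rewrite size_mulXn // leq_add2l size_poly.
rewrite (phorner_widen _ size_qXt) big_split_ord /= big1 ?add0r; last first.
  by move=> l _; rewrite coefMXn ltn_ord mul0r.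
rewrite /phorner; apply: eq_bigr => i _.
rewrite coefMXn ltnNge leq_addr /= addKn coef_poly ltn_ord exprMn -exprM -expnD.
by rewrite mulrA addnC.
Qed.

Hypothesis pcharRp : p \in [pchar R].

Lemma pchar_expn_gt0 l : (0 < p ^ l)%N.
Proof. by rewrite expn_gt0 prime_gt0 // (pcharf_prime pcharRp). Qed.

Lemma phornerx0 (b : {poly R}) : phorner b 0 = 0.
Proof. by rewrite /phorner big1 // => l _; rewrite expr0n eqn0Ngt pchar_expn_gt0 mulr0. Qed.

Lemma phornerxD (b : {poly R}) x y : phorner b (x + y) = phorner b x + phorner b y.
Proof.
have pnat_pexpn l : [pchar R].-nat (p ^ l)%N.
  by rewrite pnatX pnatE ?(pcharf_prime pcharRp) ?pcharRp.
by rewrite /phorner -big_split; apply: eq_bigr => l _; rewrite exprDn_pchar // mulrDr.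
Qed.

End PHorner.

Lemma size_sub_lead_lt (R : nzRingType) (b c : {poly R}) : b != 0 ->
  size c = size b -> lead_coef c = lead_coef b -> (size (b - c)%R < size b)%N.
Proof.
rewrite -size_poly_gt0 => b_gt0 size_cb lead_cb.
rewrite -(prednK b_gt0) ltnS; apply/leq_sizeP => l; rewrite leq_eqVlt coefB.
case/orP=> [/eqP <-|lt_bl]; first by rewrite -lead_coefE -size_cb -lead_coefE lead_cb subrr.
by rewrite !nth_default ?subrr // ?size_cb (leq_trans _ lt_bl) // leqSpred.
Qed.

Section PHornerClosed.
Variables (k : closedFieldType) (p : nat).
Hypothesis pcharkp : p \in [pchar k].

Lemma phorner_surj (b : {poly k}) z : b != 0 -> exists x, phorner p b x = z.
Proof.
move=> nz_b; pose Q := \sum_(l < size b) b`_l *: 'X^(p ^ l) - z%:P.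
have hornerQ x : Q.[x] = phorner p b x - z.
  rewrite hornerD hornerN hornerC horner_sum; congr (_ - _).
  by apply: eq_bigr => l _; rewrite hornerZ hornerXn.
have lt_D : ((size b).-1 < size b)%N by rewrite ltn_predL size_poly_gt0.
have coefQ : Q`_(p ^ (size b).-1) = lead_coef b.
  rewrite coefB coefC eqn0Ngt (pchar_expn_gt0 pcharkp) subr0 coef_sum.
  rewrite (bigD1 (Ordinal lt_D)) //= coefZ coefXn eqxx mulr1 big1 ?addr0 //.
  move=> l /negbTE; rewrite coefZ coefXn eqn_exp2l ?prime_gt1 ?(pcharf_prime pcharkp) //.
  by rewrite -val_eqE /= eq_sym => ->; rewrite mulr0.
have /closed_rootP[x /rootP]: size Q != 1%N.
  apply/eqP => size_Q1; move: nz_b.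
  by rewrite -lead_coef_eq0 -coefQ nth_default ?eqxx // size_Q1 (pchar_expn_gt0 pcharkp).
by rewrite hornerQ => /eqP; rewrite subr_eq0 => /eqP; exists x.
Qed.

Lemma pcomp_monomial_cancel_lead (b c : {poly k}) : b != 0 -> (size b <= size c)%N ->
  exists a t, (size (c - pcomp_monomial p b a t)%R < size c)%N.
Proof.
move=> nz_b le_bc; have b_gt0 : (0 < size b)%N by rewrite size_poly_gt0.
have nz_c : c != 0 by rewrite -size_poly_gt0 (leq_trans b_gt0).
have [a a_pD] := phorner_surj (lead_coef c / lead_coef b) (monic_neq0 (monicXn _ (size b).-1)).
rewrite phornerXn in a_pD; exists a, (size c - size b)%N.
rewrite /pcomp_monomial; set q := \poly_(i < size b) _.
have lead_q : (b`_(size b).-1 * a ^+ (p ^ (size b).-1)) = lead_coef c.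
  by rewrite a_pD mulrC divfK ?lead_coef_eq0.
have nz_lead_q : b`_(size b).-1 * a ^+ (p ^ (size b).-1) != 0 by rewrite lead_q lead_coef_eq0.
have nz_q : q != 0 by rewrite -size_poly_gt0 size_poly_eq.
apply: size_sub_lead_lt nz_c _ _.
  by rewrite size_mulXn // size_poly_eq // subnK.
by rewrite lead_coef_Mmonic ?monicXn // lead_coef_poly.
Qed.

End PHornerClosed.

Section PAction.
Variables (k : fieldType) (p : nat).

Definition pact m n (L : 'M[{poly k}]_(m, n)) (y : 'rV[k]_n) : 'rV[k]_m :=
  \row_r \sum_l phorner p (L r l) (y 0 l).

Definition is_polymap m n (F : 'rV[k]_m -> 'rV[k]_n) : Prop :=
  exists P : 'I_n -> {mpoly k[m]}, polymap P =1 F.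

Lemma polymap_comp m1 m2 m3 (P : 'I_m2 -> {mpoly k[m1]}) (Q : 'I_m3 -> {mpoly k[m2]}) x :
  polymap (fun i => comp_mpoly [tuple P j | j < m2] (Q i)) x = polymap Q (polymap P x).
Proof.
apply/rowP => i; rewrite !mxE comp_mpoly_meval.
by apply: meval_eq => j; rewrite tnth_mktuple mxE.
Qed.

Lemma is_polymap_comp m1 m2 m3 (F : 'rV[k]_m1 -> 'rV[k]_m2) (G : 'rV[k]_m2 -> 'rV[k]_m3) :
  is_polymap F -> is_polymap G -> is_polymap (G \o F).
Proof.
move=> [P PF] [Q QG]; exists (fun i => comp_mpoly [tuple P j | j < m2] (Q i)) => x.
by rewrite polymap_comp PF QG.
Qed.

Lemma is_polymap_id m : is_polymap (@id 'rV[k]_m).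
Proof. by exists (fun i => 'X_i) => x; apply/rowP => i; rewrite !mxE mevalXU. Qed.

Lemma is_polymap_col_perm m (s : 'S_m) : is_polymap (col_perm s : 'rV[k]_m -> 'rV[k]_m).
Proof. by exists (fun l => 'X_(s l)) => x; apply/rowP => l; rewrite !mxE mevalXU. Qed.

Definition poly_iso n (E E' : 'rV[k]_n -> 'rV[k]_n) : Prop :=
  [/\ is_polymap E, is_polymap E', cancel E E' & cancel E' E].

Lemma poly_iso_id n : poly_iso (@id 'rV[k]_n) id.
Proof. by split=> //; apply: is_polymap_id. Qed.

Lemma poly_iso_comp n (E1 E1' E2 E2' : 'rV[k]_n -> 'rV[k]_n) :
  poly_iso E1 E1' -> poly_iso E2 E2' -> poly_iso (E2 \o E1) (E1' \o E2').
Proof.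
case=> pE1 pE1' E1K E1'K [pE2 pE2' E2K E2'K].
by split; [exact: is_polymap_comp | exact: is_polymap_comp | exact: can_comp | exact: can_comp].
Qed.

Definition pact_equiv m n (L L' : 'M[{poly k}]_(m, n)) : Prop :=
  exists E E', poly_iso E E' /\ forall y, pact L y = pact L' (E y).

Lemma pact_equiv_refl m n (L : 'M_(m, n)) : pact_equiv L L.
Proof. by exists id, id; split=> //; apply: poly_iso_id. Qed.

Lemma pact_equiv_trans m n (L1 L2 L3 : 'M_(m, n)) :
  pact_equiv L1 L2 -> pact_equiv L2 L3 -> pact_equiv L1 L3.
Proof.
move=> [E1 [E1' [isoE1 act12]]] [E2 [E2' [isoE2 act23]]].
by exists (E2 \o E1), (E1' \o E2'); split=> [|y]; [exact: poly_iso_comp | rewrite act12 act23].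
Qed.

Lemma pact_col_perm m n (L : 'M_(m, n)) (s : 'S_n) y :
  pact L y = pact (col_perm s L) (col_perm s y).
Proof.
apply/rowP => r; rewrite !mxE (reindex_inj (@perm_inj _ s)) /=.
by apply: eq_bigr => l _; rewrite !mxE.
Qed.

Lemma pact_equiv_col_perm m n (L : 'M_(m, n)) (s : 'S_n) : pact_equiv L (col_perm s L).
Proof.
exists (col_perm s), (col_perm s^-1); split=> [|y]; last exact: pact_col_perm.
by split; try apply: is_polymap_col_perm; move=> y; rewrite -col_permM ?mulVg ?mulgV col_perm1.
Qed.

Definition transvect n (i j : 'I_n) (c : k) (t : nat) (y : 'rV[k]_n) : 'rV[k]_n :=
  \row_l if l == i then y 0 i + c * y 0 j ^+ (p ^ t) else y 0 l.

Lemma transvectK n (i j : 'I_n) c t : i != j -> cancel (transvect i j c t) (transvect i j (- c) t).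
Proof.
move=> neq_ij y; apply/rowP => l; rewrite !mxE.
by case: eqP => [->|//]; rewrite eqxx eq_sym (negbTE neq_ij) mulNr addrK.
Qed.

Lemma is_polymap_transvect n (i j : 'I_n) c t : is_polymap (transvect i j c t).
Proof.
exists (fun l => if l == i then 'X_i + c *: 'X_j ^+ (p ^ t) else 'X_l) => x.
apply/rowP => l; rewrite !mxE; case: eqP => _; last by rewrite mevalXU.
by rewrite mevalD mevalZ rmorphXn /= !mevalXU.
Qed.

Lemma poly_iso_transvect n (i j : 'I_n) c t : i != j ->
  poly_iso (transvect i j c t) (transvect i j (- c) t).
Proof.
move=> neq_ij; split; try exact: is_polymap_transvect; first exact: transvectK.
by move=> y; have := transvectK (- c) t neq_ij y; rewrite opprK.
Qed.

Definition col_transvect m n (L : 'M_(m, n)) (i j : 'I_n) (c : k) (t : nat) :=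
  \matrix_(r, l) if l == j then L r j - pcomp_monomial p (L r i) c t else L r l.

Hypothesis pcharkp : p \in [pchar k].

Lemma pact0 m n (L : 'M_(m, n)) : pact L 0 = 0.
Proof. by apply/rowP => r; rewrite !mxE big1 // => l _; rewrite mxE phornerx0. Qed.

Lemma pact_col_transvect m n (L : 'M_(m, n)) i j c t y : i != j ->
  pact L y = pact (col_transvect L i j c t) (transvect i j c t y).
Proof.
move=> neq_ij; have neq_ji : j != i by rewrite eq_sym.
apply/rowP => r; rewrite !mxE (bigD1 i) // (bigD1 j) ?neq_ji //=.
rewrite [in RHS](bigD1 i) // [in RHS](bigD1 j) ?neq_ji //= !mxE eqxx (negbTE neq_ij) eqxx.
rewrite (negbTE neq_ji) phornerxD // phornerB phorner_pcomp_monomial.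
rewrite [X in _ = _ + (_ + X)](eq_bigr (fun l => phorner p (L r l) (y 0 l))); last first.
  by move=> l /andP[neq_li neq_lj]; rewrite !mxE (negbTE neq_li) (negbTE neq_lj).
by ring.
Qed.

Lemma pact_equiv_col_transvect m n (L : 'M_(m, n)) i j c t : i != j ->
  pact_equiv L (col_transvect L i j c t).
Proof.
move=> neq_ij; exists (transvect i j c t), (transvect i j (- c) t).
by split=> [|y]; [exact: poly_iso_transvect | exact: pact_col_transvect].
Qed.

End PAction.

Section Triangularize.
Variables (k : closedFieldType) (p : nat) (n : nat).
Hypothesis pcharkp : p \in [pchar k].

(* Euclid's algorithm on the entries [L s i] and [L s j], by column operations. *)
Lemma pact_equiv_clear_entry (L : 'M[{poly k}]_n) (s i j : 'I_n) : i != j ->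
  exists L', [/\ pact_equiv p L L', L' s j = 0,
    forall r l, l != i -> l != j -> L' r l = L r l
  & forall r, L r i = 0 -> L r j = 0 -> L' r i = 0 /\ L' r j = 0].
Proof.
move=> neq_ij; have neq_ji : j != i by rewrite eq_sym.
move: {2}(size (L s i) + size (L s j))%N (leqnn (size (L s i) + size (L s j))) => m.
elim: m L => [|m IHm] L le_size.
  exists L; split=> //; first exact: pact_equiv_refl.
  by apply/eqP; rewrite -size_poly_eq0 -leqn0 (leq_trans _ le_size) ?leq_addl.
have [Lsj0|nz_Lsj] := eqVneq (L s j) 0.
  by exists L; split=> //; apply: pact_equiv_refl.
have [Lsi0|nz_Lsi] := eqVneq (L s i) 0.
  exists (xcol i j L); split.
  - exact: pact_equiv_col_perm.
  - by rewrite mxE tpermR.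
  - by move=> r l neq_li neq_lj; rewrite mxE tpermD // eq_sym.
  - by move=> r Lri0 Lrj0; rewrite !mxE tpermL tpermR.
have [le_ij|lt_ji] := leqP (size (L s i)) (size (L s j)).
  have [c [t lt_size]] := pcomp_monomial_cancel_lead pcharkp nz_Lsi le_ij.
  set L1 := col_transvect p L i j c t.
  have le_size1 : (size (L1 s i) + size (L1 s j) <= m)%N.
    by rewrite /L1 !mxE eqxx (negbTE neq_ij) -ltnS (leq_trans _ le_size) // ?ltn_add2l ?ltn_add2r.
  have [L' [equiv' L'sj0 L'E L'0]] := IHm _ le_size1.
  exists L'; split=> //.
  - exact: pact_equiv_trans (pact_equiv_col_transvect pcharkp L c t neq_ij) equiv'.
  - by move=> r l neq_li neq_lj; rewrite L'E // mxE (negbTE neq_lj).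
  - move=> r Lri0 Lrj0; apply: L'0; rewrite mxE ?eqxx ?(negbTE neq_ij) //.
    by rewrite Lri0 Lrj0 pcomp_monomial0 subr0.
have [c [t lt_size]] := pcomp_monomial_cancel_lead pcharkp nz_Lsj (ltnW lt_ji).
set L1 := col_transvect p L j i c t.
have le_size1 : (size (L1 s i) + size (L1 s j) <= m)%N.
  by rewrite /L1 !mxE eqxx (negbTE neq_ji) -ltnS (leq_trans _ le_size) // ?ltn_add2l ?ltn_add2r.
have [L' [equiv' L'sj0 L'E L'0]] := IHm _ le_size1.
exists L'; split=> //.
- exact: pact_equiv_trans (pact_equiv_col_transvect pcharkp L c t neq_ji) equiv'.
- by move=> r l neq_li neq_lj; rewrite L'E // mxE (negbTE neq_li).
- move=> r Lri0 Lrj0; apply: L'0; rewrite mxE ?eqxx ?(negbTE neq_ji) //.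
  by rewrite Lri0 Lrj0 pcomp_monomial0 subr0.
Qed.

Lemma pact_equiv_clear_row (L : 'M[{poly k}]_n) (s : 'I_n) :
  (forall r l : 'I_n, (r < s)%N -> (r < l)%N -> L r l = 0) ->
  exists L', pact_equiv p L L' /\ forall r l : 'I_n, (r <= s)%N -> (r < l)%N -> L' r l = 0.
Proof.
move=> trigL.
suff [L' [equiv' trigL' L's0]] : exists L', [/\ pact_equiv p L L',
    forall r l : 'I_n, (r < s)%N -> (r < l)%N -> L' r l = 0
  & forall l : 'I_n, (s < l)%N -> L' s l = 0].
  exists L'; split=> // r l; rewrite leq_eqVlt => /orP[/eqP r_eq_s|]; last exact: trigL'.
  by rewrite (val_inj r_eq_s); apply: L's0.
suff /(_ n) [L' [equiv' trigL' L's0]] : forall m, exists L', [/\ pact_equiv p L L',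
    forall r l : 'I_n, (r < s)%N -> (r < l)%N -> L' r l = 0
  & forall l : 'I_n, (s < l <= s + m)%N -> L' s l = 0].
  exists L'; split=> // l lt_sl; apply: L's0.
  by rewrite lt_sl /= (leq_trans (ltnW (ltn_ord l))) ?leq_addl.
elim=> [|m [L1 [equiv1 trigL1 L1s0]]].
  by exists L; split=> [||l]; [apply: pact_equiv_refl | exact: trigL | rewrite addn0; case: leqP].
have [lt_jn|le_nj] := ltnP (s + m.+1) n; last first.
  exists L1; split=> // l /andP[lt_sl le_l]; apply: L1s0; rewrite lt_sl /=.
  by move: (ltn_ord l) le_l le_nj; lia.
pose j := Ordinal lt_jn; have neq_sj : s != j by rewrite -val_eqE /= -{1}[val s]addn0 eqn_add2l.
have [L2 [equiv2 L2sj0 L2E L20]] := pact_equiv_clear_entry L1 s neq_sj.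
exists L2; split.
- exact: pact_equiv_trans equiv1 equiv2.
- move=> r l lt_rs lt_rl.
  have L1rj0 : L1 r j = 0 by apply: trigL1; rewrite //= (leq_trans lt_rs) ?leq_addr.
  have [L2rs0 L2rj0] := L20 r (trigL1 _ _ lt_rs lt_rs) L1rj0.
  have [->|neq_ls] := eqVneq l s => //; have [->|neq_lj] := eqVneq l j => //.
  by rewrite L2E // trigL1.
- move=> l /andP[lt_sl le_l]; have [->|neq_lj] := eqVneq l j => //.
  rewrite L2E ?L1s0 //; last by rewrite -val_eqE /= neq_ltn lt_sl orbT.
  by rewrite lt_sl /=; move: le_l neq_lj; rewrite -val_eqE /= addnS; lia.
Qed.

Lemma pact_equiv_trig (L : 'M[{poly k}]_n) : exists L', pact_equiv p L L' /\ is_trig_mx L'.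
Proof.
suff /(_ n) [L' [equiv' trigL']] : forall m, exists L', pact_equiv p L L' /\
    forall r l : 'I_n, (r < m)%N -> (r < l)%N -> L' r l = 0.
  by exists L'; split=> //; apply/is_trig_mxP => r l; apply: trigL'.
elim=> [|m [L1 [equiv1 trigL1]]]; first by exists L; split=> //; apply: pact_equiv_refl.
have [lt_mn|le_nm] := ltnP m n; last first.
  by exists L1; split=> // r l _; apply: trigL1; rewrite (leq_trans (ltn_ord r)).
have [L2 [equiv2 trigL2]] := pact_equiv_clear_row (s := Ordinal lt_mn) trigL1.
by exists L2; split=> [|r l]; [exact: pact_equiv_trans equiv1 equiv2 | apply: trigL2].
Qed.

End Triangularize.

Section TriangularKernel.
Variables (k : closedFieldType) (p : nat) (n : nat).
Hypothesis pcharkp : p \in [pchar k].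
Variable L : 'M[{poly k}]_n.
Hypothesis trigL : is_trig_mx L.

Lemma trig_pact_kernel (i : 'I_n) y :
  (forall j : 'I_n, (i < j)%N -> L j j != 0) -> phorner p (L i i) y = 0 ->
  exists v : 'rV[k]_n, v 0 i = y /\ pact p L v = 0.
Proof.
move=> nz_diag root_y; have /is_trig_mxP L0 := trigL.
pose head_i (v : 'rV[k]_n) := forall l : 'I_n, (l <= i)%N -> v 0 l = if l == i then y else 0.
suff /(_ n) [v [head_v pact_v0]] : forall m, exists v, head_i v /\
    forall r : 'I_n, (r < m)%N -> pact p L v 0 r = 0.
  by exists v; split=> [|]; [rewrite head_v ?eqxx | apply/rowP => r; rewrite pact_v0 ?mxE].
have pact_head v (r : 'I_n) : head_i v -> (r <= i)%N -> pact p L v 0 r = 0.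
  move=> head_v le_ri; rewrite mxE big1 // => l _.
  have [lt_rl|le_lr] := ltnP r l; first by rewrite L0 // phorner0.
  rewrite head_v ?(leq_trans le_lr) //; case: eqP => [eq_li|_]; last exact: phornerx0.
  rewrite eq_li in le_lr *; suff -> : r = i by [].
  by apply/val_inj/eqP; rewrite eqn_leq le_lr le_ri.
elim=> [|m [v [head_v pact_v0]]].
  by exists (\row_l if l == i then y else 0); split=> // l _; rewrite mxE.
have [le_mi|lt_im] := leqP m i.
  by exists v; split=> // r lt_rm; apply: pact_head; rewrite // -ltnS (leq_trans lt_rm).
have [lt_mn|le_nm] := ltnP m n; last first.
  by exists v; split=> // r _; apply: pact_v0; rewrite (leq_trans (ltn_ord r)).
pose r0 := Ordinal lt_mn.
have [z root_z] := phorner_surj pcharkp (- \sum_(l < n | l != r0) phorner p (L r0 l) (v 0 l))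
  (nz_diag r0 lt_im).
exists (\row_l if l == r0 then z else v 0 l); split.
  move=> l le_li; rewrite mxE ifN ?head_v //.
  by rewrite -val_eqE /= neq_ltn (leq_ltn_trans le_li lt_im).
move=> r; rewrite ltnS leq_eqVlt => /orP[/eqP r_eq_m|lt_rm].
  have -> : r = r0 by apply: val_inj.
  rewrite mxE (bigD1 r0) //= mxE eqxx root_z.
  by under eq_bigr => l /negbTE neq_lr0 do rewrite mxE neq_lr0; rewrite addNr.
rewrite -(pact_v0 r lt_rm) !mxE; apply: eq_bigr => l _; rewrite mxE.
by case: eqP => [->|//]; rewrite !L0 ?phorner0.
Qed.

Lemma trig_pact_row (y : 'rV[k]_n) (i : 'I_n) : (forall l : 'I_n, (l < i)%N -> y 0 l = 0) ->
  pact p L y 0 i = phorner p (L i i) (y 0 i).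
Proof.
move=> y_head0; have /is_trig_mxP L0 := trigL.
rewrite mxE (bigD1 i) //= big1 ?addr0 // => l /negbTE neq_li.
have [lt_il|lt_li|eq_il] := ltngtP i l; first by rewrite L0 // phorner0.
  by rewrite y_head0 // phornerx0.
by move: neq_li; rewrite -val_eqE /= eq_il eqxx.
Qed.

Hypothesis injL : injective (pact p L).

Lemma trig_pact_inj_diag (i : 'I_n) y : phorner p (L i i) y = 0 -> y = 0.
Proof.
have root0 (j : 'I_n) z : (forall j' : 'I_n, (j < j')%N -> L j' j' != 0) ->
    phorner p (L j j) z = 0 -> z = 0.
  move=> nz_diag root_z; have [v [<- pact_v0]] := trig_pact_kernel nz_diag root_z.
  by rewrite (injL (etrans pact_v0 (esym (pact0 pcharkp L)))) mxE.
(* A zero diagonal entry, below which all are nonzero, has the nonzero root 1. *)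
suff nz_diag d (j : 'I_n) : (n - j <= d)%N -> L j j != 0.
  by move=> root_y; apply: root0 root_y => j _; apply: (nz_diag n); rewrite leq_subr.
elim: d j => [|d IHd] j le_d; first by move: le_d; rewrite leqn0 subn_eq0 leqNgt ltn_ord.
apply/eqP => Ljj0; suff /eqP : (1 : k) = 0 by rewrite oner_eq0.
apply: (root0 j); last by rewrite Ljj0 phorner0.
by move=> j' lt_jj'; apply: IHd; move: le_d lt_jj' (ltn_ord j'); lia.
Qed.

Lemma trig_pact_eq0_head (y : 'rV[k]_n) (r : nat) :
  (forall i : 'I_n, (i < r)%N -> pact p L y 0 i = 0) <->
  (forall i : 'I_n, (i < r)%N -> y 0 i = 0).
Proof.
split=> [pact_y0|y0 i lt_ir]; last first.
  by rewrite trig_pact_row ?y0 ?phornerx0 // => l lt_li; rewrite y0 // (ltn_trans lt_li).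
suff y0 m (i : 'I_n) : (i < m)%N -> (i < r)%N -> y 0 i = 0 by move=> i; apply: (y0 n).
elim: m i => [|m IHm] i // lt_im lt_ir; apply: (trig_pact_inj_diag (i := i)).
rewrite -trig_pact_row ?pact_y0 // => l lt_li.
by apply: IHm; [exact: leq_trans lt_li lt_im | exact: ltn_trans lt_li lt_ir].
Qed.

End TriangularKernel.

Section AffineSpaceIso.
Variable k : fieldType.

Definition affine_space_iso n (S : 'rV[k]_n -> Prop) (d : nat) : Prop :=
  exists (phi : 'I_n -> {mpoly k[d]}) (psi : 'I_d -> {mpoly k[n]}),
    [/\ forall t, S (polymap phi t), forall t, polymap psi (polymap phi t) = t
      & forall x, S x -> polymap phi (polymap psi x) = x].

Lemma affine_space_iso_head0 r d n : (r + d)%N = n ->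
  affine_space_iso (fun y : 'rV[k]_n => forall i : 'I_n, (i < r)%N -> y 0 i = 0) d.
Proof.
move=> def_n; pose tail_ord (m : 'I_d) : 'I_n := cast_ord def_n (rshift r m).
have tail_ord_inj : injective tail_ord by move=> m1 m2 /(congr1 val)/addnI/val_inj.
exists (fun j => \sum_(m < d | tail_ord m == j) 'X_m), (fun m => 'X_(tail_ord m)).
set phi := fun j => _.
have phi_head t (j : 'I_n) : (j < r)%N -> polymap phi t 0 j = 0.
  move=> lt_jr; rewrite mxE raddf_sum big1 // => m /eqP def_j.
  by move: lt_jr; rewrite -def_j /= ltnNge leq_addr.
have phi_tail t m : polymap phi t 0 (tail_ord m) = t 0 m.
  rewrite mxE raddf_sum (big_pred1 m) /= ?mevalXU // => m'.
  by rewrite /= (inj_eq tail_ord_inj).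
split=> [t i|t|x x_head0]; first exact: phi_head.
  by apply/rowP => m; rewrite mxE mevalXU phi_tail.
apply/rowP => j; have [lt_jr|le_rj] := ltnP j r; first by rewrite x_head0 ?phi_head.
have lt_j_d : (j - r < d)%N by rewrite ltn_subLR // def_n.
have -> : j = tail_ord (Ordinal lt_j_d) by apply: val_inj; rewrite /= subnKC.
by rewrite phi_tail mxE mevalXU.
Qed.

Lemma affine_space_iso_preimage n (S S' : 'rV[k]_n -> Prop) d (E E' : 'rV[k]_n -> 'rV[k]_n) :
  poly_iso E E' -> (forall x, S' x <-> S (E x)) ->
  affine_space_iso S d -> affine_space_iso S' d.
Proof.
case=> [[P PE] [P' P'E'] EK E'K] S'E [phi [psi [S_phi psiK phiK]]].
exists (fun j => comp_mpoly [tuple phi l | l < n] (P' j)).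
exists (fun m => comp_mpoly [tuple P l | l < n] (psi m)).
split=> [t|t|x /S'E S_Ex]; rewrite !polymap_comp ?P'E' ?PE.
- by apply/S'E; rewrite E'K.
- by rewrite E'K psiK.
- by rewrite phiK // EK.
Qed.

End AffineSpaceIso.

Lemma vspace_unitmx_head0 (k : fieldType) n (W : {vspace 'rV[k]_n}) :
  exists r (A : 'M[k]_n), [/\ (r + \dim W)%N = n, A \in unitmx
    & forall v, v \in W <-> forall i : 'I_n, (i < r)%N -> (v *m A) 0 i = 0].
Proof.
(* v A lists the coordinates of v in a basis of W^C followed by a basis of W. *)
set X := vbasis W^C; set Y := vbasis W; pose e := cat_tuple X Y.
have def_n : (\dim W^C + \dim W)%N = n.
  rewrite dimv_compl dimvf dim_matrix mul1r subnK //.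
  by have := dimvS (subvf W); rewrite dimvf dim_matrix mul1r.
have free_e : free e.
  rewrite cat_free !(basis_free (vbasisP _)) /=; apply/directv_addP.
  by rewrite !(span_basis (vbasisP _)) capvC capv_compl.
have span_e v : v \in <<e>>%VS.
  by rewrite span_cat !(span_basis (vbasisP _)) addvC addv_complf memvf.
have eR (j : 'I_(\dim W)) : e`_(rshift (\dim W^C) j) = Y`_j.
  by rewrite /= nth_cat size_tuple /= ltnNge leq_addr /= addKn.
pose A : 'M[k]_n := \matrix_(m, i) coord e (cast_ord (esym def_n) i) (delta_mx 0 m).
have vA v i : (v *m A) 0 i = coord e (cast_ord (esym def_n) i) v.
  rewrite mxE {2}(row_sum_delta v) linear_sum; apply: eq_bigr => m _.
  by rewrite linearZ mxE.
exists (\dim W^C), A; split=> //.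
  rewrite -row_free_unit -kermx_eq0; apply/eqP/row_matrixP => i; rewrite row0.
  set v := row i _; have /rowP vA0 : v *m A = 0 by rewrite -row_mul mulmx_ker row0.
  rewrite (coord_span (span_e v)) big1 // => j _.
  by have := vA0 (cast_ord def_n j); rewrite vA cast_ordK !mxE => ->; rewrite scale0r.
move=> v; split.
  move=> vW i lt_ir; rewrite vA.
  have /coord_span def_v : v \in <<Y>>%VS by rewrite (span_basis (vbasisP W)).
  pose c (i : 'I_(\dim W^C + \dim W)) := if split i is inr j then coord Y j v else 0.
  have {}def_v : v = \sum_(i < \dim W^C + \dim W) c i *: e`_i.
    rewrite big_split_ord /= big1 ?add0r => [|j _]; last by rewrite /c (unsplitK (inl _ j)) scale0r.
    by rewrite {1}def_v; apply: eq_bigr => j _; rewrite eR /c (unsplitK (inr _ j)).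
  rewrite def_v coord_sum_free // /c; case: splitP => // j /= def_j.
  by move: lt_ir; rewrite def_j ltnNge leq_addr.
move=> v_head0; rewrite (coord_span (span_e v)) big_split_ord /= big1 ?add0r.
  by apply: memv_suml => j _; rewrite eR memvZ // vbasis_mem // mem_nth // size_tuple ltn_ord.
move=> j _; have := v_head0 (cast_ord def_n (lshift (\dim W) j)) (ltn_ord j).
by rewrite vA cast_ordK => ->; rewrite scale0r.
Qed.

Section AddPolyMatrix.
Variables (k : fieldType) (p : nat).

Lemma pact_map_polyC_mulmx m1 m2 n (B : 'M[k]_(m1, m2)) (L : 'M[{poly k}]_(m2, n)) y :
  pact p (map_mx polyC B *m L) y = pact p L y *m B^T.
Proof.
apply/rowP => r; rewrite /pact !mxE.
under eq_bigr => l _ do rewrite mxE phorner_sum.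
rewrite exchange_big /=; apply: eq_bigr => j _.
rewrite !mxE mulr_suml; apply: eq_bigr => l _.
by rewrite (mul_polyC (B r j)) phornerZ mulrC.
Qed.

Variables (n : nat) (N : 'I_n -> nat) (a : 'I_n -> 'I_n -> nat -> k).

Definition addpoly_mx : 'M[{poly k}]_n := \matrix_(j, i) \poly_(l < (N j).+1) a j i l.

Lemma polymap_addpoly : polymap (addpoly p N a) =1 pact p addpoly_mx.
Proof.
move=> x; apply/rowP => j; rewrite !mxE /addpoly raddf_sum; apply: eq_bigr => i _.
rewrite raddf_sum mxE (@phorner_widen _ _ _ _ (N j).+1) ?size_poly //.
by apply: eq_bigr => l _; rewrite /= mevalZ rmorphXn /= mevalXU coef_poly ltn_ord.
Qed.

End AddPolyMatrix.

Theorem lemma7p1 (k : closedFieldType) (p : nat) (n : nat)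
    (N : 'I_n -> nat) (a : 'I_n -> 'I_n -> nat -> k) :
  p \in [pchar k] ->
  finite_polymap (addpoly p N a) ->
  bijective (polymap (addpoly p N a)) ->
  forall W : {vspace 'rV[k]_n},
  (* f^{-1}(W)_red is isomorphic to A^{dim W}: mutually inverse polynomial maps
     between A^{dim W} and the reduced closed subvariety {x | f(x) \in W}. *)
  exists (phi : 'I_n -> {mpoly k[\dim W]}) (psi : 'I_(\dim W) -> {mpoly k[n]}),
    [/\ forall t : 'rV[k]_(\dim W), polymap (addpoly p N a) (polymap phi t) \in W,
        forall t : 'rV[k]_(\dim W), polymap psi (polymap phi t) = t
      & forall x : 'rV[k]_n, polymap (addpoly p N a) x \in W ->
          polymap phi (polymap psi x) = x].
Proof.
move=> pcharkp _ [g fK _] W; set f := polymap (addpoly p N a).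
have [r [A [def_n unitA memW]]] := vspace_unitmx_head0 W.
have [L [[E [E' [isoE pactE]]] trigL]] :=
  pact_equiv_trig pcharkp (map_mx polyC A^T *m addpoly_mx N a).
have fA x : f x *m A = pact p L (E x).
  by rewrite -pactE pact_map_polyC_mulmx trmxK /f polymap_addpoly.
have injL : injective (pact p L).
  case: isoE => _ _ EK E'K u u' eq_u; rewrite -(E'K u) -(E'K u'); congr E.
  by apply: (can_inj fK); apply: (can_inj (mulmxK unitA)); rewrite !fA !E'K.
suff : affine_space_iso (fun x => f x \in W) (\dim W) by [].
apply: affine_space_iso_preimage isoE _ (affine_space_iso_head0 k def_n) => x.
by rewrite memW fA trig_pact_eq0_head.
Qed.
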